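(* Let $\sigma:\mathcal C^*\to\mathcal B^*$ and $\varphi:\mathcal B^*\to\mathcal A^*$ be morphisms of class $P_{ret}$ (with $\mathcal A,\mathcal B,\mathcal C$ finite alphabets). Then the composition $\varphi\sigma:\mathcal C^*\to\mathcal A^*$ is of class $P_{ret}$.
   Context: For a finite word $w$, $\overline{w}$ denotes its reversal; $w$ is a palindrome if $w=\overline w$. A morphism $\varphi:\mathcal B^*\to\mathcal A^*$ is of class $P_{ret}$ if there exists a palindrome $p\in\mathcal A^*$ such that: (a) $\varphi(b)p$ is a palindrome for every $b\in\mathcal B$; (b) for every $b\in\mathcal B$, $\varphi(b)p$ contains exactly two occurrences of $p$, one as a prefix and one as a suffix; (c) $\varphi(b)\ne\varphi(c)$ for all distinct $b,c\in\mathcal B$. *)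

From mathcomp Require Import all_boot.
Set Implicit Arguments. Unset Strict Implicit. Unset Printing Implicit Defensive.

Definition morph_apply (B A : Type) (f : B -> seq A) (w : seq B) : seq A :=
  flatten (map f w).

Definition morph_comp (C B A : Type) (phi : B -> seq A) (sigma : C -> seq B)
  : C -> seq A := fun c => morph_apply phi (sigma c).

Definition palindrome (A : eqType) (w : seq A) : bool := rev w == w.

Definition occurs_at (A : eqType) (p w : seq A) (i : nat) : bool :=
  (i + size p <= size w) && (take (size p) (drop i w) == p).

Definition occ_count (A : eqType) (p w : seq A) : nat :=
  count (occurs_at p w) (iota 0 (size w).+1).

Definition P_ret (B A : finType) (phi : B -> seq A) : Prop :=
  exists p : seq A,
    palindrome p /\
    (forall b : B, palindrome (phi b ++ p)) /\
    (forall b : B, [/\ occ_count p (phi b ++ p) = 2,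
                       prefix p (phi b ++ p) & suffix p (phi b ++ p)]) /\
    (forall b c : B, b <> c -> phi b <> phi c).

From mathcomp Require Import all_boot zify.
Set Implicit Arguments. Unset Strict Implicit. Unset Printing Implicit Defensive.

(* Let q and p be the palindromes witnessing P_ret for sigma and phi; the composite is
   P_ret with the palindrome phi(q) p.  As every phi(b) p and p are palindromes, reversal
   maps phi(w) p to phi(rev w) p, which settles both palindromicity conditions.  Since p
   occurs in phi(b) p only at its two ends, every occurrence of p in phi(w) p starts at a
   cut between letter images, and phi(u) p is a prefix of phi(v) p only when u is a prefix
   of v (phi is injective on letters).  Hence the occurrences of phi(q) p in phi(w) p are
   exactly the images of the occurrences of q in w, and the return property of q for
   sigma transfers to phi(q) p for the composite. *)

Section Occurrences.
Variable A : eqType.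
Implicit Types p u w y z : seq A.

Lemma occurs_atP p w i :
  reflect (exists u v, w = u ++ p ++ v /\ size u = i) (occurs_at p w i).
Proof.
apply: (iffP andP) => [[le_w /eqP take_p] | [u [v [-> <-]]]].
  exists (take i w), (drop (size p) (drop i w)).
  by rewrite -{1}take_p !cat_take_drop size_takel //; lia.
by rewrite !size_cat drop_size_cat // take_size_cat //; split=> //; lia.
Qed.

Lemma occurs_at_size p w i : occurs_at p w i -> i + size p <= size w.
Proof. by case/andP. Qed.

Lemma occurs_at0 p w : occurs_at p w 0 = prefix p w.
Proof.
rewrite /occurs_at prefixE drop0 add0n.
case: leqP => //= lt_wp; apply/esym/eqP; rewrite take_oversize ?(ltnW lt_wp) // => eq_wp.
by move: lt_wp; rewrite eq_wp ltnn.
Qed.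

Lemma occurs_at_catl p y z i :
  i + size p <= size y -> occurs_at p (y ++ z) i = occurs_at p y i.
Proof.
move=> le_y; rewrite /occurs_at size_cat le_y (leq_trans le_y (leq_addr _ _)).
by rewrite !take_drop addnC takel_cat.
Qed.

Lemma occurs_at_catr p y z i : occurs_at p (y ++ z) (size y + i) = occurs_at p z i.
Proof.
by rewrite /occurs_at size_cat -addnA leq_add2l drop_cat ltnNge leq_addr /= addKn.
Qed.

Lemma occurs_at_size_cat p y z : occurs_at p (y ++ z) (size y) = prefix p z.
Proof. by rewrite -[size y]addn0 occurs_at_catr occurs_at0. Qed.

Lemma occurs_at_catr_sub p y z i :
  size y <= i -> occurs_at p (y ++ z) i = occurs_at p z (i - size y).
Proof. by move=> le_i; rewrite -{1}(subnKC le_i) occurs_at_catr. Qed.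

Lemma catl_occurs_at p w i v : occurs_at (p ++ v) w i -> occurs_at p w i.
Proof.
by case/occurs_atP=> u [x [-> <-]]; apply/occurs_atP; exists u, (v ++ x); rewrite -catA.
Qed.

Lemma occ_count_ge p w t :
  uniq t -> all (occurs_at p w) t -> size t <= occ_count p w.
Proof.
move=> uniq_t /allP occ_t; rewrite /occ_count -size_filter.
apply: uniq_leq_size => // i t_i; rewrite mem_filter occ_t // mem_iota ltnS.
by have := occurs_at_size (occ_t i t_i); lia.
Qed.

Lemma occ_countE p w t :
  uniq t -> (forall i, occurs_at p w i = (i \in t)) -> occ_count p w = size t.
Proof.
move=> uniq_t occ_t; rewrite /occ_count -size_filter.
apply/perm_size/uniq_perm => //; first by rewrite filter_uniq ?iota_uniq.
move=> i; rewrite mem_filter mem_iota ltnS; case occ_i: (occurs_at p w i).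
  by rewrite -occ_t occ_i; have := occurs_at_size occ_i; lia.
by rewrite -occ_t occ_i.
Qed.

Section ReturnWord.
Variables p u : seq A.
Hypotheses (count_up : occ_count p (u ++ p) = 2) (prefix_up : prefix p (u ++ p)).

Lemma return_size_gt0 : 0 < size u.
Proof.
rewrite lt0n size_eq0; apply/eqP=> u0.
move: count_up; rewrite u0 cat0s (@occ_countE _ _ [:: 0]) //.
move=> i; rewrite inE; apply/idP/eqP=> [/occurs_at_size | ->]; first lia.
by rewrite occurs_at0 prefix_refl.
Qed.

Lemma occurs_at_returnE i : occurs_at p (u ++ p) i = (i == 0) || (i == size u).
Proof.
have occ_0 : occurs_at p (u ++ p) 0 by rewrite occurs_at0.
have occ_u : occurs_at p (u ++ p) (size u).
  by rewrite occurs_at_size_cat prefix_refl.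
apply/idP/idP=> [occ_i | /orP[]/eqP-> //]; apply/negPn/negP=> /norP[i0 iu].
have := @occ_count_ge p (u ++ p) [:: i; 0; size u]; rewrite count_up /= !inE.
by rewrite negb_or i0 iu eq_sym -lt0n return_size_gt0 occ_i occ_0 occ_u => /(_ isT isT).
Qed.

End ReturnWord.
End Occurrences.

Section Morphism.
Variables (B A : Type) (f : B -> seq A).
Local Notation F := (morph_apply f).

Lemma morph_apply_nil : F [::] = [::].
Proof. by []. Qed.

Lemma morph_apply_cons b w : F (b :: w) = f b ++ F w.
Proof. by []. Qed.

Lemma morph_apply_cat u v : F (u ++ v) = F u ++ F v.
Proof. by rewrite /morph_apply map_cat flatten_cat. Qed.

Lemma morph_apply_rcons w b : F (rcons w b) = F w ++ f b.
Proof. by rewrite -cats1 morph_apply_cat /morph_apply /= cats0. Qed.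

End Morphism.

Section ReturnMorphism.
Variables (B A : eqType) (f : B -> seq A) (p : seq A).
Hypotheses (p_pal : palindrome p) (fp_pal : forall b, palindrome (f b ++ p)).
Hypotheses (fp_count : forall b, occ_count p (f b ++ p) = 2)
  (fp_prefix : forall b, prefix p (f b ++ p)) (f_inj : injective f).
Local Notation F := (morph_apply f).

Lemma size_letter_gt0 b : 0 < size (f b).
Proof. exact: return_size_gt0 (fp_count b) (fp_prefix b). Qed.

Lemma size_morph_gt0 w : 0 < size w -> 0 < size (F w).
Proof.
case: w => // b w _; rewrite morph_apply_cons size_cat.
exact: leq_trans (size_letter_gt0 b) (leq_addr _ _).
Qed.

Lemma prefix_morph_cat w : prefix p (F w ++ p).
Proof.
elim: w => [|b w IH]; first by rewrite morph_apply_nil prefix_refl.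
case/prefixP: IH => s eq_s; case/prefixP: (fp_prefix b) => t eq_t.
by apply/prefixP; exists (t ++ s); rewrite morph_apply_cons -catA eq_s catA eq_t catA.
Qed.

Lemma rev_morph_cat w : rev (F w ++ p) = F (rev w) ++ p.
Proof.
elim: w => [|b w IH]; first exact/eqP.
rewrite morph_apply_cons -catA rev_cat IH rev_cons morph_apply_rcons -!catA.
by move/eqP: (fp_pal b); rewrite rev_cat (eqP p_pal) => ->.
Qed.

Lemma palindrome_morph_cat w : palindrome w -> palindrome (F w ++ p).
Proof. by move=> /eqP w_pal; rewrite /palindrome rev_morph_cat w_pal. Qed.

Lemma occurs_at_letterE b i : occurs_at p (f b ++ p) i = (i == 0) || (i == size (f b)).
Proof. by rewrite (occurs_at_returnE (fp_count b) (fp_prefix b)). Qed.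

(* Inside a single [f b ++ p] the word [p] only occurs at the two ends, so an occurrence
   cannot straddle a letter image. *)
Lemma occurs_at_morph_cat w i :
  occurs_at p (F w ++ p) i -> exists2 k, k <= size w & i = size (F (take k w)).
Proof.
elim: w i => [|b w IH] i.
  rewrite morph_apply_nil cat0s => /occurs_at_size.
  by rewrite -[X in _ <= X]add0n leq_add2r leqn0 => /eqP->; exists 0.
rewrite morph_apply_cons -catA; case: (leqP (size (f b)) i) => [le_i | lt_i].
  rewrite occurs_at_catr_sub // => /IH[k le_k eq_k]; exists k.+1 => //.
  by rewrite /= morph_apply_cons size_cat -eq_k subnKC.
case/prefixP: (prefix_morph_cat w) => s ->; rewrite catA occurs_at_catl.
  rewrite occurs_at_letterE => /orP[/eqP-> | /eqP eq_i]; first by exists 0.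
  by rewrite eq_i ltnn in lt_i.
by rewrite size_cat leq_add2r ltnW.
Qed.

Lemma letter_eq_of_cat b b' s t : f b ++ p ++ s = f b' ++ p ++ t -> b = b'.
Proof.
wlog le_bb' : b b' s t / size (f b) <= size (f b').
  move=> wlog_eq E; case: (leqP (size (f b)) (size (f b'))) => [|/ltnW] le.
    exact: wlog_eq E.
  exact/esym/(wlog_eq _ _ t s).
move=> E; apply: f_inj.
have : occurs_at p (f b' ++ p) (size (f b)).
  rewrite -(occurs_at_catl t) ?size_cat ?leq_add2r // -catA -E.
  by rewrite occurs_at_size_cat prefix_prefix.
rewrite occurs_at_letterE => /orP[/eqP eq0 | /eqP eq_size].
  by have := size_letter_gt0 b; rewrite eq0.
by have := congr1 (take (size (f b))) E; rewrite take_size_cat // eq_size take_size_cat.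
Qed.

Lemma prefix_morph_cat_inv u v : prefix (F u ++ p) (F v ++ p) -> prefix u v.
Proof.
elim: u v => [|b u IH] [|b' v] // pre.
  move/size_prefix: pre; rewrite morph_apply_cons morph_apply_nil cat0s !size_cat.
  rewrite -[X in _ <= X]add0n leq_add2r leqn0 addn_eq0 => /andP[/eqP fb0 _].
  by have := size_letter_gt0 b; rewrite fb0.
move: pre; rewrite !morph_apply_cons -!catA => pre.
have eq_b : b = b'.
  case/prefixP: (prefix_morph_cat u) => s1 eq1.
  case/prefixP: (prefix_morph_cat v) => s2 eq2.
  by move/prefixP: (pre) => [y]; rewrite eq1 eq2 -!catA => /esym/letter_eq_of_cat.
by subst b'; rewrite prefix_catr // eqxx in pre; rewrite prefix_cons eqxx IH.
Qed.

Lemma morph_apply_inj : injective F.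
Proof.
move=> u v eq_uv.
have pre_uv : prefix u v by apply: prefix_morph_cat_inv; rewrite eq_uv prefix_refl.
have pre_vu : prefix v u by apply: prefix_morph_cat_inv; rewrite eq_uv prefix_refl.
have eq_size : size u = size v by apply/eqP; rewrite eqn_leq !size_prefix.
by move: pre_uv; rewrite prefixE eq_size take_size => /eqP.
Qed.

Lemma occurs_at_morph q w k :
  occurs_at q w k -> occurs_at (F q ++ p) (F w ++ p) (size (F (take k w))).
Proof.
case/occurs_atP=> u [v [-> <-]]; rewrite take_size_cat // !morph_apply_cat -!catA.
case/prefixP: (prefix_morph_cat v) => s ->.
by rewrite occurs_at_size_cat catA prefix_prefix.
Qed.

Lemma occurs_at_morph_inv q w i :
  occurs_at (F q ++ p) (F w ++ p) i -> exists2 k, occurs_at q w k & i = size (F (take k w)).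
Proof.
move=> occ_i; have [k le_k eq_i] : exists2 k, k <= size w & i = size (F (take k w)).
  apply: occurs_at_morph_cat; case/prefixP: (prefix_morph_cat q) => s eq_s.
  by apply: (@catl_occurs_at _ _ _ _ s); rewrite -eq_s.
exists k => //; move: occ_i; rewrite eq_i -{1}(cat_take_drop k w) morph_apply_cat -catA.
rewrite occurs_at_size_cat -[k in occurs_at _ _ k](size_takel le_k).
by rewrite -{2}(cat_take_drop k w) occurs_at_size_cat => /prefix_morph_cat_inv.
Qed.

Lemma occurs_at_morph_returnE u q :
  (forall k, occurs_at q (u ++ q) k = (k == 0) || (k == size u)) ->
  forall i, occurs_at (F q ++ p) (F (u ++ q) ++ p) i = (i == 0) || (i == size (F u)).
Proof.
move=> occ_q i; apply/idP/idP.
  case/occurs_at_morph_inv=> k; rewrite occ_q => /orP[]/eqP-> ->.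
    by rewrite take0 morph_apply_nil.
  by rewrite take_size_cat // eqxx orbT.
case/orP=> /eqP->.
  by have := @occurs_at_morph q (u ++ q) 0; rewrite take0 occ_q; apply.
have := @occurs_at_morph q (u ++ q) (size u).
by rewrite take_size_cat // occ_q eqxx orbT; apply.
Qed.

End ReturnMorphism.

(* The suffix clause of [P_ret] holds for every word and is dropped. *)
Lemma P_retP (B A : finType) (phi : B -> seq A) :
  P_ret phi <->
  exists p, [/\ palindrome p, forall b, palindrome (phi b ++ p),
    forall b, occ_count p (phi b ++ p) = 2, forall b, prefix p (phi b ++ p) & injective phi].
Proof.
split=> [[p [p_pal [fp_pal [fp_ret phi_neq]]]]
        | [p [p_pal fp_pal fp_count fp_prefix phi_inj]]].
  exists p; split=> // [b | b | b c eq_bc]; try by case: (fp_ret b).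
  by case: (eqVneq b c) => // /eqP ne_bc; case: (phi_neq _ _ ne_bc).
exists p; do 2!split=> //; split=> [b | b c ne_bc /phi_inj //].
by split=> //; apply: suffix_suffix.
Qed.

Theorem proposition5p3 (A B C : finType) (sigma : C -> seq B) (phi : B -> seq A) :
  P_ret sigma -> P_ret phi -> P_ret (morph_comp phi sigma).
Proof.
case/P_retP=> q [q_pal sq_pal sq_count sq_prefix sigma_inj].
case/P_retP=> p [p_pal fp_pal fp_count fp_prefix phi_inj].
apply/P_retP; exists (morph_apply phi q ++ p).
have comp_cat c : morph_comp phi sigma c ++ (morph_apply phi q ++ p)
                  = morph_apply phi (sigma c ++ q) ++ p.
  by rewrite /morph_comp morph_apply_cat catA.
have occE c := occurs_at_morph_returnE fp_count fp_prefix phi_inj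
                 (occurs_at_returnE (sq_count c) (sq_prefix c)).
split=> [||c|c|].
- exact: palindrome_morph_cat.
- by move=> c; rewrite comp_cat palindrome_morph_cat.
- rewrite comp_cat (@occ_countE _ _ _ [:: 0; size (morph_comp phi sigma c)]) // => [|i].
    rewrite /= inE andbT eq_sym -lt0n.
    exact: (size_morph_gt0 fp_count fp_prefix (return_size_gt0 (sq_count c) (sq_prefix c))).
  by rewrite occE !inE.
- by rewrite comp_cat -occurs_at0 occE.
- exact: inj_comp (morph_apply_inj fp_count fp_prefix phi_inj) sigma_inj.
Qed.
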